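(* Let $\vec B=(b_0,\dots,b_{N-1})$ be a binary digit vector with cumulative digit function $g$. Let $x\in(0,1)$ and write $x=\sum_{i=1}^\infty n_i N^{-i}$ with $n_i\in\{0,1,\dots,N-1\}$. Then $$F_{\vec B}(x)=\sum_{i=1}^\infty\Big(\prod_{k=1}^{i-1}b_{n_k}\Big)\frac{g(n_i)}{\|\vec B\|^i}.$$
   Context: A binary digit vector of length (scale factor) $N\ge3$ is $\vec B=(b_0,\dots,b_{N-1})\in\{0,1\}^N$ with $2\le\|\vec B\|:=\sum_i b_i\le N-1$; its digit set is $D=\{i:b_i=1\}$. With $\phi_d(x)=(x+d)/N$ for $d\in D$, let $\mu_{\vec B}$ be the unique Borel probability measure with $\mu_{\vec B}=\frac{1}{\|\vec B\|}\sum_{d\in D}\mu_{\vec B}\circ\phi_d^{-1}$, supported on the attractor $C_{\vec B}\subset[0,1]$. The CDF is $F_{\vec B}(x)=\mu_{\vec B}([0,x])$. The cumulative digit function is $g(0)=0$, $g(i)=\sum_{j=0}^{i-1}b_j$ for $1\le i\le N$. An empty product equals $1$. *)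

From HB Require Import structures.
From mathcomp Require Import all_boot all_order all_algebra.
From mathcomp Require Export all_classical all_reals all_analysis.
Set Implicit Arguments. Unset Strict Implicit. Unset Printing Implicit Defensive.
Import Order.TTheory GRing.Theory Num.Theory.
Local Open Scope ring_scope.
Local Open Scope classical_set_scope.

Definition bnorm (N : nat) (b : 'I_N -> bool) : nat := (\sum_(i < N) b i)%N.

Definition gcum (N : nat) (b : 'I_N -> bool) (i : nat) : nat :=
  (\sum_(j < N | (j < i)%N) b j)%N.

Definition is_digit_vector (N : nat) (b : 'I_N -> bool) : Prop :=
  (3 <= N)%N /\ (2 <= bnorm b)%N /\ (bnorm b <= N.-1)%N.

Definition phi_d {R : realType} (N d : nat) (x : R) : R := (x + d%:R) / N%:R.

Definition self_similar {R : realType} (N : nat) (b : 'I_N -> bool)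
  (mu : set R -> \bar R) : Prop :=
  forall A : set R, measurable A ->
    mu A = (((bnorm b)%:R^-1)%:E *
           (\sum_(d < N | b d) mu (@phi_d R N d @^-1` A)))%E.

From HB Require Import structures.
From mathcomp Require Import all_boot all_order all_algebra.
From mathcomp Require Import all_classical all_reals all_analysis.
From mathcomp Require Import lra zify ring.
Import Order.TTheory GRing.Theory Num.Theory numFieldNormedType.Exports.
Local Open Scope ring_scope.
Local Open Scope classical_set_scope.
Set Implicit Arguments. Unset Strict Implicit. Unset Printing Implicit Defensive.

(* Write G(t) = mu(]-oo, t]).  Self-similarity reads
   G(t) = ||B||^-1 sum_(b_d = 1) G(N t - d).  For t <= 0 every term is at most
   G(t), and a digit d >= 1 (there are at least two digits) contributes at most
   G(t - 1); hence G(t) = G(t - 1), so G is constant on ]-oo, 0] and, tending to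
   0 at -oo, vanishes there.  Symmetrically G = 1 on [1, +oo[.  If
   j <= N t <= j + 1, every term with d <> j is then 0 or 1, which gives
   G(t) = (g(j) + b_j G(N t - j)) / ||B||.  Iterating this along the digits of
   x, with remainders r_k in [0, 1], yields
   G(x) = S_k + (prod_(i<=k) b_(n_i)) ||B||^-k G(r_k),
   so the partial sums S_k of the series are within ||B||^-k of G(x). *)

Section sum_card.
Variables (R : realDomainType) (I : finType) (P : pred I).

Lemma ler_sum_card_eq (f : I -> R) (c : R) : (forall i, P i -> f i <= c) ->
  \sum_(i | P i) f i = #|P|%:R * c -> forall i, P i -> f i = c.
Proof.
move=> fc sumf i Pi.
have ge0 j : P j -> 0 <= c - f j by rewrite subr_ge0 => /fc.
have /(psumr_eq0P ge0)/(_ i Pi)/eqP : \sum_(j | P j) (c - f j) = 0.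
  by rewrite sumrB sumr_const sumf mulr_natl subrr.
by rewrite subr_eq0 => /eqP.
Qed.

Lemma ger_sum_card_eq (f : I -> R) (c : R) : (forall i, P i -> c <= f i) ->
  \sum_(i | P i) f i = #|P|%:R * c -> forall i, P i -> f i = c.
Proof.
move=> fc sumf i Pi; apply: oppr_inj.
apply: (@ler_sum_card_eq (fun i => - f i) (- c)) => //.
- by move=> j Pj; rewrite lerN2 fc.
- by rewrite sumrN sumf mulrN.
Qed.

End sum_card.

Lemma card_gt1_neq (T : finType) (P : pred T) (i0 : T) :
  (1 < #|P|)%N -> exists2 i, P i & i != i0.
Proof.
case/card_gt1P => i [j [Pi Pj ij]].
by have [<-|] := eqVneq i i0; [exists j; rewrite // eq_sym | exists i].
Qed.

Lemma cvg_geometric_err (R : realType) (u : R ^nat) (l q : R) :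
  `|q| < 1 -> (forall k, `|l - u k| <= q ^+ k) -> u @ \oo --> l.
Proof.
move=> q_lt1 err.
apply: (@squeeze_cvgr _ _ _ _ (fun k => l - q ^+ k) (fun k => l + q ^+ k)).
- by near=> k; rewrite -ler_distlC err.
- rewrite -[X in _ --> X]subr0.
  by apply: cvgB; [exact: cvg_cst | exact: cvg_expr].
- rewrite -[X in _ --> X]addr0.
  by apply: cvgD; [exact: cvg_cst | exact: cvg_expr].
Unshelve. all: by end_near.
Qed.

Section real_cdf.
Variables (R : realType) (mu : probability R R).

Definition rcdf (t : R) : R := fine (mu `]-oo, t]).

Lemma rcdfE t : mu `]-oo, t] = (rcdf t)%:E.
Proof. by rewrite fineK // fin_num_measure. Qed.

Lemma rcdf_ge0 t : 0 <= rcdf t.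
Proof. exact: fine_ge0. Qed.

Lemma rcdf_le1 t : rcdf t <= 1.
Proof. by rewrite -lee_fin -rcdfE probability_le1. Qed.

Lemma rcdf_nondecreasing : {homo rcdf : s t / s <= t}.
Proof.
move=> s t st; rewrite -lee_fin -!rcdfE le_measure ?inE //; exact: subitvPr.
Qed.

(* The library's [cdf] is that of a random variable; [mu] is the law of the
   identity. *)
Let coord : R -> R := idfun.
HB.instance Definition _ :=
  isMeasurableFun.Build _ _ R R coord (@measurable_id _ R setT).

Lemma cvg_measure_itvNy : mu `]-oo, - k%:R] @[k --> \oo] --> 0%E.
Proof.
apply: cvg_comp (@cvg_cdfNy0 _ _ _ mu coord).
by apply/cvgNry; rewrite opprK; exact: cvgr_idn.
Qed.

Lemma cvg_measure_itvy : mu `]-oo, k%:R] @[k --> \oo] --> 1%E.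
Proof. exact: cvg_comp cvgr_idn (@cvg_cdfy1 _ _ _ mu coord). Qed.

Lemma rcdf_eq0 : (forall t, t <= 0 -> rcdf t = rcdf (t - 1)) ->
  forall t, t <= 0 -> rcdf t = 0.
Proof.
move=> shift t t0.
have rcdfN k : rcdf (- k%:R) = rcdf 0.
  elim: k => [|k IH]; first by rewrite oppr0.
  by rewrite -natr1 opprD -shift ?IH // oppr_le0.
have : mu `]-oo, - k%:R] @[k --> \oo] --> (rcdf 0)%:E.
  by under eq_fun do rewrite rcdfE rcdfN; exact: cvg_cst.
move/(cvg_unique (@ereal_hausdorff R) cvg_measure_itvNy) => [rcdf00].
by apply/eqP; rewrite eq_le rcdf_ge0 rcdf00 rcdf_nondecreasing.
Qed.

Lemma rcdf_eq1 : (forall t, 1 <= t -> rcdf t = rcdf (t + 1)) ->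
  forall t, 1 <= t -> rcdf t = 1.
Proof.
move=> shift t t1.
have rcdfS k : rcdf k.+1%:R = rcdf 1.
  elim: k => [//|k IH]; by rewrite -natr1 -shift // ler1n.
have : mu `]-oo, k%:R] @[k --> \oo] --> (rcdf 1)%:E.
  apply: cvg_near_cst; exists 1%N => // k /= k1.
  by rewrite rcdfE -(prednK k1) rcdfS.
move/(cvg_unique (@ereal_hausdorff R) cvg_measure_itvy) => [rcdf11].
by apply/eqP; rewrite eq_le rcdf_le1 rcdf11 rcdf_nondecreasing.
Qed.

Lemma measure_itv0_rcdf x : 0 <= x -> rcdf 0 = 0 -> mu `[0, x] = (rcdf x)%:E.
Proof.
move=> x0 rcdf00; rewrite -rcdfE; apply/eqP.
rewrite eq_le le_measure ?inE //=; last first.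
  by apply: subitvPl; rewrite bnd_simp.
rewrite (@itv_bndbnd_setU _ _ _ (BLeft 0)) ?bnd_simp //.
rewrite (le_trans (measureU2 _ _ _)) // -[leRHS]add0e leeD2r //.
rewrite (@le_trans _ _ (mu `]-oo, 0%R])) //; last by rewrite rcdfE rcdf00.
by rewrite le_measure ?inE //; apply: subitvPr; rewrite bnd_simp.
Qed.

End real_cdf.

Section nary_expansion.
Variables (R : realType) (N : nat) (n : nat -> 'I_N).

Definition nary_term (k : nat) : R :=
  if (k == 0)%N then 0 else (n k)%:R / N%:R ^+ k.

Hypothesis N_gt0 : (0 < N)%N.

Let q : R := N%:R^-1.

Let q_ge0 : 0 <= q.
Proof. by rewrite invr_ge0. Qed.

Let Nq : N%:R * q = 1.
Proof. by rewrite mulfV // pnatr_eq0 -lt0n. Qed.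

Lemma nary_term_ge0 k : 0 <= nary_term k.
Proof.
by rewrite /nary_term; case: eqP => // _; rewrite divr_ge0 // exprn_ge0.
Qed.

Lemma nary_termS k : nary_term k.+1 = (n k.+1)%:R * q ^+ k.+1.
Proof. by rewrite /nary_term /= exprVn. Qed.

Lemma nary_term_le k : nary_term k.+1 <= q ^+ k - q ^+ k.+1.
Proof.
have digit_le : (n k.+1)%:R <= N%:R - 1 :> R.
  by rewrite lerBrDr natr1 ler_nat.
rewrite nary_termS (le_trans (ler_wpM2r (exprn_ge0 _ q_ge0) digit_le)) //.
by rewrite mulrBl mul1r exprS mulrA Nq mul1r.
Qed.

Lemma series_nary_sub_le k j : (k < j)%N ->
  series nary_term j - series nary_term k.+1 <= q ^+ k.
Proof.
move=> kj; rewrite sub_series_geq //.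
rewrite (@le_trans _ _ (\sum_(k.+1 <= i < j) (- q ^+ i - - q ^+ i.-1))) //.
  apply: ler_sum_nat => -[|i] /andP[ki _] //=.
  by rewrite opprK addrC nary_term_le.
rewrite (@telescope_sumr_eq _ _ _ (fun i => - q ^+ i.-1)) //= opprK.
by rewrite addrC lerBlDr lerDl exprn_ge0.
Qed.

Variable x : R.
Hypothesis hn : series nary_term @ \oo --> x.

Lemma series_nary_le k : series nary_term k <= x.
Proof.
rewrite -(cvg_lim _ hn) //; apply: nondecreasing_cvgn_le.
  by apply: nondecreasing_series => i _ _; exact: nary_term_ge0.
by apply/cvg_ex; exists x.
Qed.

Lemma nary_le_series k : x <= series nary_term k.+1 + q ^+ k.
Proof.
apply: (cvgr_to_le hn); exists k.+1 => // j /= kj.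
by rewrite -lerBlDl series_nary_sub_le.
Qed.

(* The number with N-ary digits n_(k+1), n_(k+2), ... *)
Definition nary_rem (k : nat) : R := N%:R ^+ k * (x - series nary_term k.+1).

Lemma nary_rem0 : nary_rem 0 = x.
Proof.
by rewrite /nary_rem seriesEord /= big_ord1 /nary_term /= expr0 mul1r subr0.
Qed.

Lemma nary_rem_ge0 k : 0 <= nary_rem k.
Proof. by rewrite mulr_ge0 ?exprn_ge0 ?subr_ge0 ?series_nary_le. Qed.

Lemma nary_rem_le1 k : nary_rem k <= 1.
Proof.
rewrite -(expr1n _ k) -Nq exprMn ler_wpM2l ?exprn_ge0 //.
by rewrite lerBlDl nary_le_series.
Qed.

Lemma nary_remS k : N%:R * nary_rem k = nary_rem k.+1 + (n k.+1)%:R.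
Proof.
rewrite /nary_rem [series _ k.+2]seriesSr nary_termS !exprS.
set s := series _ k.+1; set c := (n k.+1)%:R.
have NqS : N%:R * N%:R ^+ k * (q * q ^+ k) = 1.
  by rewrite mulrACA -exprMn Nq expr1n mulr1.
transitivity (N%:R * N%:R ^+ k * (x - (s + c * (q * q ^+ k)))
              + c * (N%:R * N%:R ^+ k * (q * q ^+ k))); first by ring.
by rewrite NqS mulr1 mulrA.
Qed.

End nary_expansion.

Lemma bnorm_card (N : nat) (b : 'I_N -> bool) : bnorm b = #|b|.
Proof.
rewrite /bnorm -sum1_card [RHS]big_mkcond; apply: eq_bigr => i _.
by rewrite unfold_in; case: (b i).
Qed.

Lemma preimage_phi_d_itvNy (R : realType) (N d : nat) (t : R) : (0 < N)%N ->
  @phi_d R N d @^-1` `]-oo, t] = `]-oo, N%:R * t - d%:R].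
Proof.
move=> N_gt0; apply/seteqP; split => y; rewrite /= !in_itv /= /phi_d;
  by rewrite ler_pdivrMr ?ltr0n // lerBrDr mulrC.
Qed.

Section self_similar_cdf.
Variables (R : realType) (N : nat) (b : 'I_N -> bool) (mu : probability R R).
Hypotheses (hB : is_digit_vector b) (hmu : self_similar b mu).

Let N_gt0 : (0 < N)%N. Proof. by case: hB => ? _; lia. Qed.
Let bnorm_gt0 : 0 < (bnorm b)%:R :> R.
Proof. by case: hB => _ [? _]; rewrite ltr0n; lia. Qed.

Lemma sum_rcdf_digits t :
  \sum_(d < N | b d) rcdf mu (N%:R * t - d%:R) = #|b|%:R * rcdf mu t.
Proof.
have [->] : (rcdf mu t)%:E =
    ((bnorm b)%:R^-1 * \sum_(d < N | b d) rcdf mu (N%:R * t - d%:R))%:E.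
  rewrite -rcdfE hmu; last exact: measurable_itv.
  rewrite EFinM -sumEFin; congr (_ * _)%E; apply: eq_bigr => d _.
  by rewrite preimage_phi_d_itvNy // rcdfE.
by rewrite -bnorm_card mulrA divff ?mul1r ?gt_eqF.
Qed.

Let card_gt1 : (1 < #|b|)%N.
Proof. by case: hB => _ [? _]; rewrite -bnorm_card. Qed.

Let N_ge1 : 1 <= N%:R :> R.
Proof. by rewrite ler1n. Qed.

Lemma rcdf_shiftN t : t <= 0 -> rcdf mu t = rcdf mu (t - 1).
Proof.
move=> t_le0; have [d0 bd0 d0_neq0] := card_gt1_neq (Ordinal N_gt0) card_gt1.
have d0_ge1 : 1 <= d0%:R :> R.
  by move: d0_neq0; rewrite ler1n lt0n -val_eqE.
have Nt_le : (N%:R - 1) * t <= 0 by rewrite mulr_ge0_le0 ?subr_ge0.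
have le_t d : b d -> rcdf mu (N%:R * t - d%:R) <= rcdf mu t.
  by move=> _; apply: rcdf_nondecreasing; have := ler0n R d; lra.
have E := ler_sum_card_eq le_t (sum_rcdf_digits t) bd0.
by apply/le_anti; rewrite -{1}E !rcdf_nondecreasing //; lra.
Qed.

Lemma rcdf_shiftP t : 1 <= t -> rcdf mu t = rcdf mu (t + 1).
Proof.
move=> t_ge1; have Nmax : (N.-1 < N)%N by rewrite prednK.
have [d0 bd0 d0_neq] := card_gt1_neq (Ordinal Nmax) card_gt1.
have d0_le : d0%:R + 2 <= N%:R :> R.
  rewrite -[2]/(2%:R) -natrD ler_nat; have := ltn_ord d0.
  by move: d0_neq; rewrite -val_eqE /= => /eqP; lia.
have Nt_ge : 0 <= (N%:R - 1) * (t - 1) by rewrite mulr_ge0 ?subr_ge0.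
have ge_t d : b d -> rcdf mu t <= rcdf mu (N%:R * t - d%:R).
  move=> _; apply: rcdf_nondecreasing.
  have : d%:R + 1 <= N%:R :> R by rewrite natr1 ler_nat.
  lra.
have E := ger_sum_card_eq ge_t (sum_rcdf_digits t) bd0.
by apply/le_anti; rewrite -{2}E !rcdf_nondecreasing //; lra.
Qed.

Lemma rcdf_le0 t : t <= 0 -> rcdf mu t = 0.
Proof. exact: rcdf_eq0 rcdf_shiftN t. Qed.

Lemma rcdf_ge1 t : 1 <= t -> rcdf mu t = 1.
Proof. exact: rcdf_eq1 rcdf_shiftP t. Qed.

Lemma gcum_sum (j : nat) :
  (gcum b j)%:R = \sum_(d < N | b d) ((d < j)%N%:R : R).
Proof.
rewrite /gcum natr_sum big_mkcond [RHS]big_mkcond; apply: eq_bigr => d _.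
by case: (b d); case: (d < j)%N.
Qed.

Lemma sum_digit_indicator (j : 'I_N) :
  \sum_(d < N | b d) ((d == j)%:R : R) = (b j)%:R.
Proof.
have [bj|bj] := boolP (b j).
  by rewrite (bigD1 j) //= eqxx big1 ?addr0 // => d /andP[_ /negbTE ->].
by rewrite big1 // => d bd; case: eqP bj => // <-; rewrite bd.
Qed.

Lemma rcdf_digit t (j : 'I_N) : j%:R <= N%:R * t <= j%:R + 1 ->
  rcdf mu t = (bnorm b)%:R^-1 *
    ((gcum b j)%:R + (b j)%:R * rcdf mu (N%:R * t - j%:R)).
Proof.
move=> /andP[j_le j_ge].
have rcdf_other (d : 'I_N) : rcdf mu (N%:R * t - d%:R) =
    (d < j)%N%:R + (d == j)%:R * rcdf mu (N%:R * t - j%:R).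
  rewrite -val_eqE /=; case: ltngtP => [dj|jd|/val_inj->]; last first.
  - by rewrite mul1r add0r.
  - have jd_R : j%:R + 1 <= d%:R :> R by rewrite natr1 ler_nat.
    by rewrite rcdf_le0 ?mul0r ?addr0 //; lra.
  - have dj_R : d%:R + 1 <= j%:R :> R by rewrite natr1 ler_nat.
    by rewrite rcdf_ge1 ?mul0r ?addr0 //; lra.
rewrite -{1}[rcdf mu t](mulKf (lt0r_neq0 bnorm_gt0)).
rewrite bnorm_card -sum_rcdf_digits.
congr (_ * _); under eq_bigr do rewrite rcdf_other.
by rewrite big_split /= -big_distrl /= gcum_sum sum_digit_indicator.
Qed.

End self_similar_cdf.

Section cdf_expansion.
Variables (R : realType) (N : nat) (b : 'I_N -> bool) (n : nat -> 'I_N).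

Definition cdf_term (i : nat) : R :=
  if (i == 0)%N then 0 else
    (\prod_(1 <= k < i) ((b (n k))%:R : R)) * (gcum b (n i))%:R
      / (bnorm b)%:R ^+ i.

Variables (mu : probability R R) (x : R).
Hypotheses (hB : is_digit_vector b) (hmu : self_similar b mu)
  (hn : series (@nary_term R _ n) @ \oo --> x).

Let N_gt0 : (0 < N)%N. Proof. by case: hB => ? _; lia. Qed.

Let digit_prod (k : nat) : R := \prod_(1 <= i < k) (b (n i))%:R.

Lemma rcdf_expansion k :
  rcdf mu x = series cdf_term k.+1
    + digit_prod k.+1 * (bnorm b)%:R^-1 ^+ k * rcdf mu (nary_rem n x k).
Proof.
elim: k => [|k IH].
  rewrite seriesEord /= big_ord1 /cdf_term /= /digit_prod big_geq //.
  by rewrite nary_rem0 expr0 !mul1r add0r.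
have rem_digit : (n k.+1)%:R <= N%:R * nary_rem n x k <= (n k.+1)%:R + 1.
  by rewrite nary_remS // lerDr nary_rem_ge0 // addrC lerD2l nary_rem_le1.
have termS : cdf_term k.+1 =
    digit_prod k.+1 * (gcum b (n k.+1))%:R * (bnorm b)%:R^-1 ^+ k.+1.
  by rewrite /cdf_term /= exprVn.
have prodS : digit_prod k.+2 = digit_prod k.+1 * (b (n k.+1))%:R.
  by rewrite /digit_prod big_nat_recr.
rewrite IH (rcdf_digit hB hmu rem_digit) nary_remS // addrK.
by rewrite [series _ k.+2]seriesSr termS prodS exprS; ring.
Qed.

Lemma rcdf_series_err k :
  `|rcdf mu x - series cdf_term k.+1| <= (bnorm b)%:R^-1 ^+ k.
Proof.
rewrite (rcdf_expansion k) addrC addKr -mulrA mulrCA ger0_norm; last first.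
  by rewrite !mulr_ge0 ?exprn_ge0 ?invr_ge0 ?rcdf_ge0 ?prodr_ge0.
rewrite ler_piMr ?exprn_ge0 ?invr_ge0 // mulr_ile1 ?rcdf_ge0 ?rcdf_le1 //.
  by rewrite prodr_ge0.
by apply: prodr_ile1 => i _; case: (b (n i)); rewrite /= ?ler01 ?lexx.
Qed.

End cdf_expansion.

Theorem proposition2p3 (R : realType) (N : nat) (b : 'I_N -> bool)
  (mu : probability R R)
  (hB : is_digit_vector b)
  (hmu : self_similar b mu)
  (x : R) (hx0 : 0 < x) (hx1 : x < 1)
  (n : nat -> 'I_N)
  (hn : ([series (if (k == 0)%N then 0 else (n k)%:R / N%:R ^+ k)]_k : R^nat)
          @ \oo --> x) :
  ([series (if (i == 0)%N then 0 else
       (\prod_(1 <= k < i) ((b (n k))%:R : R)) * (gcum b (n i))%:R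
         / (bnorm b)%:R ^+ i)]_i : R^nat)
    @ \oo --> fine (mu `[0, x]).
Proof.
have bnorm_gt1 : 1 < (bnorm b)%:R :> R by case: hB => _ [? _]; rewrite ltr1n.
rewrite (measure_itv0_rcdf (ltW hx0) (rcdf_le0 hB hmu (lexx 0))) /= -cvg_shiftS.
apply: (@cvg_geometric_err _ _ _ (bnorm b)%:R^-1).
  by rewrite ger0_norm ?invr_ge0 // invf_lt1 // (lt_trans ltr01).
exact: (rcdf_series_err hB hmu hn).
Qed.
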